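(* Let $0<\alpha<1$. Let $N\ge1$, $0\le N_1<N$, and let $p=(p_1,\dots,p_N)$ be a probability vector with $p_1=\dots=p_{N_1}=0$ and $p_k>0$ for $N_1<k\le N$. Let $c_1,\dots,c_N$ be fixed reals, not all zero, with $0\le c_k\le1$ for $k\le N_1$, $|c_k|\le1$ for $k>N_1$, and $\sum_{k=1}^Nc_k=0$. For $0<\varepsilon\le\min_{k>N_1}p_k$ define $p(\varepsilon)$ by $p_k(\varepsilon)=c_k\varepsilon$ for $k\le N_1$ and $p_k(\varepsilon)=p_k+c_k\varepsilon$ for $k>N_1$. Write $S=\sum_{k=N_1+1}^Np_k^\alpha$. Then, as $\varepsilon\to0+$: (i) if $N_1\ge1$ and $c_k\ne0$ for some $k\le N_1$, then $\mathcal H_\alpha(p)-\mathcal H_\alpha(p(\varepsilon))\sim\frac{\varepsilon^\alpha}{\alpha-1}\Big(\sum_{k=1}^{N_1}c_k^\alpha\Big)S^{-1}$; (ii) if $c_k=0$ for all $k\le N_1$ and $\sum_{k=N_1+1}^Nc_kp_k^{\alpha-1}\ne0$, then $\mathcal H_\alpha(p)-\mathcal H_\alpha(p(\varepsilon))\sim\frac{\alpha\varepsilon}{\alpha-1}\Big(\sum_{k=N_1+1}^Nc_kp_k^{\alpha-1}\Big)S^{-1}$; (iii) if $c_k=0$ for all $k\le N_1$ and $\sum_{k=N_1+1}^Nc_kp_k^{\alpha-1}=0$, then $\mathcal H_\alpha(p)-\mathcal H_\alpha(p(\varepsilon))\sim\frac{\alpha\varepsilon^2}{2}\Big(\sum_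{k=N_1+1}^Nc_k^2p_k^{\alpha-2}\Big)S^{-1}$.
   Context: $\mathcal H_\alpha(p)=\frac1{1-\alpha}\log\sum_kp_k^\alpha$ (Rényi entropy), with $0^\alpha=0$; logarithms are natural. $a(\varepsilon)\sim b(\varepsilon)$ means $a(\varepsilon)/b(\varepsilon)\to1$. *)

From HB Require Import structures.
From mathcomp Require Import all_boot all_order all_algebra.
From mathcomp Require Import all_classical all_reals all_analysis.
Set Implicit Arguments. Unset Strict Implicit. Unset Printing Implicit Defensive.
Import Order.TTheory GRing.Theory Num.Theory.
Import numFieldNormedType.Exports.
Local Open Scope ring_scope.

(* Renyi entropy H_alpha(p) = 1/(1-alpha) * ln (sum_k p_k^alpha), with
   powR 0 alpha = 0 for alpha <> 0 (convention 0^alpha = 0). *)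
Definition renyi (R : realType) (N : nat) (alpha : R) (p : 'I_N -> R) : R :=
  (1 - alpha)^-1 * ln (\sum_(k < N) p k `^ alpha).

(* The perturbed vector p(eps); indices are 0-based, so "k <= N1" of the
   paper becomes (k < N1)%N here. *)
Definition perturb (R : realType) (N N1 : nat) (p c : 'I_N -> R) (eps : R)
  : 'I_N -> R :=
  fun k => if (k < N1)%N then c k * eps else p k + c k * eps.

From HB Require Import structures.
From mathcomp Require Import all_boot all_order all_algebra.
From mathcomp Require Import all_classical all_reals all_analysis.
From mathcomp Require Import ring lra.
Import Order.TTheory GRing.Theory Num.Theory.
Import numFieldNormedType.Exports.
Local Open Scope classical_set_scope.
Local Open Scope ring_scope.

(* Write f(eps) = sum_k p_k(eps)^alpha and S = f(0).  The coordinates k <= N1 contribute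
   exactly eps^alpha * sum_k c_k^alpha, and by Taylor's theorem for y |-> y^alpha at p_k > 0
   each k > N1 contributes alpha c_k p_k^(alpha-1) eps
   + alpha (alpha-1)/2 c_k^2 p_k^(alpha-2) eps^2 + o(eps^2).  As alpha < 1, eps^alpha
   dominates eps, so in each of the three cases the first non-vanishing term G(eps) is
   the leading term of f(eps) - S, and ln(1 + x) ~ x turns this into
   H_alpha(p) - H_alpha(p(eps)) = (ln f(eps) - ln S) / (alpha - 1) ~ G(eps) / ((alpha - 1) S). *)

Section logarithm_quotient.
Context {R : realType}.

Lemma is_derive_quotient_cvg (f : R -> R) (x df : R) : is_derive x 1 f df ->
  (fun h => (f (x + h) - f x) / h) @ 0^' --> df.
Proof.
move=> [fx <-]; apply: cvg_trans fx; apply: near_eq_cvg; near=> h.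
by rewrite /= [h *: 1]mulr1 (addrC h) mulrC.
Unshelve. all: by end_near. Qed.

Lemma cvg_id_at_right0 : (fun t : R => t) @ 0^'+ --> 0.
Proof. exact: cvg_at_right_filter cvg_id. Qed.

Lemma ln1D_quotient_cvg : (fun y : R => ln (1 + y) / y) @ 0^' --> (1 : R).
Proof.
have := @is_derive_quotient_cvg (@ln R) 1 _ (is_derive1_ln ltr01).
by rewrite ln1 invr1; under eq_fun do rewrite subr0.
Qed.

Lemma cvg_dnbhs0 {T : Type} {F : set_system T} {FF : Filter F} {y : T -> R} :
  y @ F --> 0 -> (\forall t \near F, y t != 0) -> y @ F --> 0^'.
Proof.
move=> y0 ny0 A A0; have := y0 _ A0.
by apply: filterS2 ny0 => t yt0 /(_ yt0).
Qed.

Lemma ln_sub_equiv {T : Type} {F : set_system T} {FF : Filter F} {S : R}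
    {f G h : T -> R} :
  0 < S -> G @ F --> 0 -> h @ F --> 0 -> (\forall t \near F, G t != 0) ->
  (\forall t \near F, f t = S + G t * (1 + h t)) ->
  (fun t => (ln (f t) - ln S) / (G t / S)) @ F --> (1 : R).
Proof.
move=> S0 G0 h0 G_neq0 fE.
set y := fun t => G t * (1 + h t) / S.
have y0 : y @ F --> 0.
  have : y @ F --> 0 * (1 + 0) / S.
    by apply: cvgM; [apply: cvgM => //; exact: cvgD (cvg_cst _) h0 | exact: cvg_cst].
  by rewrite !mul0r.
have h1 : \forall t \near F, `|h t| < 1 by exact: cvgr0_norm_lt.
have y_neq0 : \forall t \near F, y t != 0.
  near=> t; have ht : `|h t| < 1 by near: t.
  rewrite mulf_neq0 ?invr_eq0 ?(gt_eqF S0) // mulf_neq0 //; first by near: t.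
  apply: contraTneq ht => /eqP; rewrite addrC addr_eq0 => /eqP ->.
  by rewrite normrN normr1 ltxx.
have y_gt : \forall t \near F, `|y t| < 1 by exact: cvgr0_norm_lt.
have q : (fun t => ln (1 + y t) / y t * (1 + h t)) @ F --> (1 : R) * (1 + 0).
  apply: cvgM; last exact: cvgD (cvg_cst _) h0.
  exact: (cvg_comp _ _ (cvg_dnbhs0 y0 y_neq0) ln1D_quotient_cvg).
rewrite addr0 mulr1 in q; apply: cvg_trans q; apply: near_eq_cvg; near=> t.
have yt : y t != 0 by near: t.
have y1 : 0 < 1 + y t.
  have : `|y t| < 1 by near: t.
  by rewrite ltr_norml => /andP[] + _; rewrite -subr_gt0 opprK addrC.
have -> : f t = S * (1 + y t).
  have -> : f t = S + G t * (1 + h t) by near: t.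
  by rewrite /y; field; rewrite gt_eqF.
rewrite lnM ?posrE // (addrC (ln S)) addrK /y.
field; move: yt; rewrite /y !mulf_eq0 !negb_or (gt_eqF S0).
by case/andP=> /andP[-> ->].
Unshelve. all: by end_near. Qed.
End logarithm_quotient.

Section powR_taylor.
Context {R : realType}.

Lemma ler_mean_value (g g' : R -> R) (x y B : R) :
  (forall s, Num.min x y <= s <= Num.max x y -> is_derive s 1 g (g' s)) ->
  (forall s, Num.min x y <= s <= Num.max x y -> `|g' s| <= B) ->
  `|g y - g x| <= B * `|y - x|.
Proof.
wlog xy : x y / x <= y => [wlog_xy|].
  case/orP: (le_total x y) => [/wlog_xy //|yx].
  by rewrite distrC (distrC y) minC maxC; exact: wlog_xy.
rewrite (min_idPl xy) (max_idPr xy) => gd gB.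
have gc : {within `[x, y], continuous g}.
  apply: derivable_within_continuous => s; rewrite in_itv /= => /gd.
  by case.
have [s + ->] := MVT_segment xy (fun s sxy => gd s (subset_itv_oo_cc sxy)) gc.
rewrite in_itv /= => /gB sB; rewrite normrM.
exact: ler_wpM2r.
Qed.

Lemma powR_taylor1 (b x e : R) : 0 < x -> 0 < e ->
  exists2 d, 0 < d & forall y, `|y - x| < d ->
    `|y `^ b - x `^ b - b * x `^ (b - 1) * (y - x)| <= e * `|y - x|.
Proof.
move=> x0 e0.
have := @is_derive_quotient_cvg _ (@powR R ^~ b) x _ (is_derive1_powR b x0).
move=> /cvgrPdist_le /(_ e e0); rewrite near_withinE => /nbhs_norm0P [d d0 hd].
exists d => // y yd; have [->|yx] := eqVneq y x.
  by rewrite !subrr mulr0 subr0 normr0 mulr0.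
have yx0 : y - x != 0 by rewrite subr_eq0.
move: (hd (y - x) yd yx0); rewrite (addrC x) subrK.
have -> : y `^ b - x `^ b - b * x `^ (b - 1) * (y - x) =
    (y - x) * ((y `^ b - x `^ b) / (y - x) - b * x `^ (b - 1)) by field.
by rewrite normrM [e * _]mulrC distrC; apply: ler_wpM2l.
Qed.

Definition powR_rem2 (a x y : R) : R := y `^ a - x `^ a - a * x `^ (a - 1) * (y - x)
  - a * (a - 1) / 2 * x `^ (a - 2) * (y - x) ^+ 2.

Lemma powR_rem2xx (a x : R) : powR_rem2 a x x = 0.
Proof. by rewrite /powR_rem2 !subrr mulr0 expr0n /= mulr0 !subr0. Qed.

Lemma is_derive_powR_rem2 (a x y : R) : 0 < y -> is_derive y 1 (powR_rem2 a x)
  (a * (y `^ (a - 1) - x `^ (a - 1) - (a - 1) * x `^ (a - 2) * (y - x))).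
Proof.
move=> y0.
have dlin : is_derive y 1 (@id R - cst x) (1 - 0) by apply: is_deriveB.
have := is_deriveB (is_deriveB (is_deriveB (is_derive1_powR a y0)
  (is_derive_cst (x `^ a) y 1)) (is_deriveZ (a * x `^ (a - 1)) dlin))
  (is_deriveZ (a * (a - 1) / 2 * x `^ (a - 2)) (is_deriveX 2 dlin)).
have -> : (@powR R)^~ a - cst (x `^ a) - (a * x `^ (a - 1)) \*: (@id R - cst x)
    - (a * (a - 1) / 2 * x `^ (a - 2)) \*: (@id R - cst x) ^+ 2 = powR_rem2 a x.
  by apply/funext => t.
move/is_derive_eq; apply; rewrite /= !subr0 expr1 !scaler1 /GRing.scale /=.
by rewrite (_ : (id - cst x) y = y - x) //; field.
Qed.

Lemma powR_taylor2 (a x e : R) : 0 < x -> 0 < e ->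
  exists2 d, 0 < d & forall y, `|y - x| < d -> `|powR_rem2 a x y| <= e * (y - x) ^+ 2.
Proof.
move=> x0 e0; have a1_gt0 : 0 < `|a| + 1 by rewrite ltr_wpDl.
have [d d0 hd] := @powR_taylor1 (a - 1) x _ x0 (divr_gt0 e0 a1_gt0).
exists (Num.min d x); first by rewrite lt_min d0.
move=> y; rewrite lt_min => /andP[yd yx].
have near_x s : Num.min x y <= s <= Num.max x y -> `|s - x| <= `|y - x|.
  have := ler_norm (y - x); have := ler_norm (x - y); rewrite distrC ler_norml.
  by case: (leP x y) => _ ? ? /andP[? ?]; apply/andP; split; lra.
have s_gt0 s : `|s - x| <= `|y - x| -> 0 < s.
  by move=> sx; move: (le_lt_trans sx yx); rewrite ltr_norml; lra.
(* The derivative of the remainder is a times the first-order remainder of y |-> y^(a-1). *)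
rewrite -[powR_rem2 a x y]subr0 -(powR_rem2xx a x).
pose g' s := a * (s `^ (a - 1) - x `^ (a - 1) - (a - 1) * x `^ (a - 2) * (s - x)).
apply: le_trans (@ler_mean_value (powR_rem2 a x) g' x y (e * `|y - x|) _ _) _.
- by move=> s /near_x /s_gt0 /is_derive_powR_rem2.
- move=> s /near_x sx; rewrite /g' normrM.
  have := hd s (le_lt_trans sx yd); rewrite (_ : a - 1 - 1 = a - 2); last by ring.
  move=> /le_trans hs; apply: le_trans (ler_wpM2l (normr_ge0 a) (hs _ (lexx _))) _.
  rewrite mulrA; apply: ler_pM => //; first by rewrite mulr_ge0 // ltW // divr_gt0.
  by rewrite mulrCA ger_pMr // ler_pdivrMr // mul1r lerDl.
- by rewrite -mulrA -expr2 real_normK ?num_real.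
Qed.

Lemma powR_rem2_cvg (a x c : R) : 0 < x ->
  (fun t => powR_rem2 a x (x + c * t) / t ^+ 2) @ 0^'+ --> 0.
Proof.
move=> x0; apply/cvgrPdist_le => e e0.
have c1_gt0 : 0 < c ^+ 2 + 1 by rewrite ltr_wpDl ?sqr_ge0.
have [d d0 hd] := @powR_taylor2 a x _ x0 (divr_gt0 e0 c1_gt0).
have ct0 : (fun t => c * t) @ 0^'+ --> 0.
  rewrite -[X in _ --> X](mulr0 c); apply: cvgM; first exact: cvg_cst.
  exact: cvg_id_at_right0.
near=> t.
have t0 : 0 < t by near: t; exact: nbhs_right_gt.
have ctd : `|x + c * t - x| < d by rewrite addrC addKr; near: t; exact: cvgr0_norm_lt.
rewrite sub0r normrN normrM normfV normrX (gtr0_norm t0) ler_pdivrMr ?exprn_gt0 //.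
apply: le_trans (hd _ ctd) _; rewrite [_ - x]addrC addKr exprMn mulrA.
rewrite ler_wpM2r ?sqr_ge0 // mulrAC ler_pdivrMr // ler_wpM2l ?ltW //.
by rewrite ltrDl.
Unshelve. all: by end_near. Qed.

Lemma powR_rem2E (a x y : R) : y `^ a = x `^ a + a * x `^ (a - 1) * (y - x)
  + a * (a - 1) / 2 * x `^ (a - 2) * (y - x) ^+ 2 + powR_rem2 a x y.
Proof. by rewrite /powR_rem2; ring. Qed.

End powR_taylor.

Lemma psumr_gt0 (R : numDomainType) (I : finType) (P : pred I) (F : I -> R) (i : I) :
  (forall j, P j -> 0 <= F j) -> P i -> 0 < F i -> 0 < \sum_(j | P j) F j.
Proof.
move=> F_ge0 Pi Fi; rewrite lt_def sumr_ge0 // psumr_neq0 // andbT.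
by apply/hasP; exists i; rewrite ?mem_index_enum ?Pi.
Qed.

Section renyi_perturbation.
Variables (R : realType) (alpha : R) (N N1 : nat) (p c : 'I_N -> R).
Hypotheses (alpha_gt0 : 0 < alpha) (alpha_lt1 : alpha < 1) (N1_lt_N : (N1 < N)%N).
Hypothesis p_zero : forall k : 'I_N, (k < N1)%N -> p k = 0.
Hypothesis p_gt0 : forall k : 'I_N, (N1 <= k)%N -> 0 < p k.
Hypothesis c_ge0 : forall k : 'I_N, (k < N1)%N -> 0 <= c k.

Local Notation S := (\sum_(k < N | (N1 <= k)%N) p k `^ alpha).
Local Notation f t := (\sum_(k < N) perturb N1 p c t k `^ alpha).
Local Notation C0 := (\sum_(k < N | (k < N1)%N) c k `^ alpha).
Local Notation C1 := (\sum_(k < N | (N1 <= k)%N) c k * p k `^ (alpha - 1)).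
Local Notation C2 := (\sum_(k < N | (N1 <= k)%N) c k ^+ 2 * p k `^ (alpha - 2)).
Local Notation K := (alpha * (alpha - 1) / 2).
Local Notation rho t :=
  (\sum_(k < N | (N1 <= k)%N) powR_rem2 alpha (p k) (p k + c k * t)).

Lemma bigID_lt_N1 (F : 'I_N -> R) :
  \sum_(k < N) F k = \sum_(k < N | (k < N1)%N) F k + \sum_(k < N | (N1 <= k)%N) F k.
Proof.
rewrite (bigID (fun k : 'I_N => (k < N1)%N)) /=.
by under [in X in _ + X]eq_bigl do rewrite -leqNgt.
Qed.

Lemma S_gt0 : 0 < S.
Proof.
apply: (@psumr_gt0 _ _ _ _ (Ordinal N1_lt_N)) => //= [k _|]; first exact: powR_ge0.
exact/powR_gt0/p_gt0.
Qed.

Lemma renyi_gapE t : renyi alpha p - renyi alpha (perturb N1 p c t) =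
  (alpha - 1)^-1 * (ln (f t) - ln S).
Proof.
rewrite /renyi (bigID_lt_N1 (fun k => p k `^ alpha)) big1 ?add0r; last first.
  by move=> k /p_zero ->; rewrite powR0 ?gt_eqF.
by field; rewrite !subr_eq0 lt_eqF ?gt_eqF.
Qed.

Lemma perturb_expansion t : 0 <= t -> f t - S =
  t `^ alpha * C0 + alpha * t * C1 + K * t ^+ 2 * C2 + rho t.
Proof.
move=> t_ge0; rewrite bigID_lt_N1.
under eq_bigr => k k_lt do rewrite /perturb k_lt powRM ?c_ge0 // mulrC.
under [in X in _ + X - _]eq_bigr => k k_ge.
  rewrite /perturb ltnNge k_ge /= (powR_rem2E _ (p k)) [_ - p k]addrC addKr.
  rewrite (_ : alpha * _ * _ = alpha * t * (c k * p k `^ (alpha - 1))); last by ring.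
  rewrite (_ : _ * (c k * t) ^+ 2 = K * t ^+ 2 * (c k ^+ 2 * p k `^ (alpha - 2)));
    last by ring.
  over.
rewrite -big_distrr /= 3![in X in X = _]big_split /= -!big_distrr /=.
ring.
Qed.

Lemma rho_small : (fun t => rho t / t ^+ 2) @ 0^'+ --> 0.
Proof.
under eq_fun do rewrite mulr_suml.
have rem0 (k : 'I_N) : (N1 <= k)%N ->
    (fun t => powR_rem2 alpha (p k) (p k + c k * t) / t ^+ 2) @ 0^'+ --> 0.
  by move=> k_ge; exact: powR_rem2_cvg (p_gt0 k k_ge).
have := @cvg_big _ _ +%R 0 _ add_continuous _ 0^'+ (index_enum 'I_N) _ (fun=> 0)
  (at_right_proper_filter 0) rem0.
by rewrite big1.
Qed.

Lemma renyi_gap_equiv (Q G h : R -> R) : (forall t, Q t = G t / ((alpha - 1) * S)) ->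
  G @ 0^'+ --> 0 -> h @ 0^'+ --> 0 -> (\forall t \near 0^'+, G t != 0) ->
  (forall t, 0 < t -> f t - S = G t * (1 + h t)) ->
  (fun t => (renyi alpha p - renyi alpha (perturb N1 p c t)) / Q t) @ 0^'+ --> (1 : R).
Proof.
move=> QE G0 h0 G_neq0 fE.
have f_near : \forall t \near 0^'+, f t = S + G t * (1 + h t).
  by near=> t; rewrite -fE ?(addrC S) ?subrK //; near: t; exact: nbhs_right_gt.
apply: cvg_trans _ (ln_sub_equiv S_gt0 G0 h0 G_neq0 f_near); apply: near_eq_cvg.
near=> t; rewrite renyi_gapE QE; field.
rewrite gt_eqF ?S_gt0 // subr_eq0 lt_eqF //=; near: t; exact: G_neq0.
Unshelve. all: by end_near. Qed.

Lemma renyi_gap_equiv_support : (exists k : 'I_N, (k < N1)%N /\ c k != 0) ->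
  (fun eps => (renyi alpha p - renyi alpha (perturb N1 p c eps)) /
     (eps `^ alpha / (alpha - 1) * C0 * S^-1)) @ 0^'+ --> (1 : R).
Proof.
case=> k [k_lt ck_neq0].
have C0_gt0 : 0 < C0.
  apply: (@psumr_gt0 _ _ _ _ k) => // [j _|]; first exact: powR_ge0.
  by apply: powR_gt0; rewrite lt_def ck_neq0 c_ge0.
have := (@renyi_gap_equiv (fun t => t `^ alpha / (alpha - 1) * C0 * S^-1) (fun t => t `^ alpha * C0)
  (fun t => t `^ (1 - alpha) * ((alpha * C1 + t * (K * C2 + rho t / t ^+ 2)) / C0))).
move=> H; refine (H _ _ _ _ _).
- by move=> t; rewrite invfM; ring.
- rewrite -[X in _ --> X](mul0r C0); apply: cvgM; [exact: powR_cvg0 | exact: cvg_cst].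
- rewrite -[X in _ --> X](mul0r ((alpha * C1 + 0 * (K * C2 + 0)) / C0)).
  apply: cvgM; first by apply: powR_cvg0; rewrite subr_gt0.
  apply: cvgM; last exact: cvg_cst.
  apply: cvgD; first exact: cvg_cst.
  apply: cvgM; first exact: cvg_id_at_right0.
  by apply: cvgD; [exact: cvg_cst | exact: rho_small].
- near=> t; have t_gt0 : 0 < t by near: t; exact: nbhs_right_gt.
  by rewrite mulf_neq0 ?gt_eqF ?powR_gt0.
- move=> t t_gt0; rewrite perturb_expansion ?ltW //.
  have u_gt0 : 0 < t `^ (1 - alpha) by rewrite powR_gt0.
  have -> : t `^ alpha = t / t `^ (1 - alpha).
    rewrite powRB ?(gt_eqF t_gt0) ?implybT // powRr1 ?ltW //.
    by field; rewrite !gt_eqF ?powR_gt0.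
  by field; rewrite !gt_eqF.
Unshelve. all: by end_near. Qed.

Section support_unperturbed.
Hypothesis c_zero : forall k : 'I_N, (k < N1)%N -> c k = 0.

Lemma C0_eq0 : C0 = 0.
Proof. by rewrite big1 // => k /c_zero ->; rewrite powR0 ?gt_eqF. Qed.

Lemma renyi_gap_equiv_linear : C1 != 0 ->
  (fun eps => (renyi alpha p - renyi alpha (perturb N1 p c eps)) /
     (alpha * eps / (alpha - 1) * C1 * S^-1)) @ 0^'+ --> (1 : R).
Proof.
move=> C1_neq0.
apply: (@renyi_gap_equiv (fun t => alpha * t / (alpha - 1) * C1 * S^-1)
  (fun t => alpha * t * C1) (fun t => t * ((K * C2 + rho t / t ^+ 2) / (alpha * C1)))).
- by move=> t; rewrite invfM; ring.
- rewrite -[X in _ --> X](mul0r C1); apply: cvgM; last exact: cvg_cst.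
  rewrite -[X in _ --> X](mulr0 alpha).
  by apply: cvgM; [exact: cvg_cst | exact: cvg_id_at_right0].
- rewrite -[X in _ --> X](mul0r ((K * C2 + 0) / (alpha * C1))).
  apply: cvgM; first exact: cvg_id_at_right0.
  apply: cvgM; last exact: cvg_cst.
  by apply: cvgD; [exact: cvg_cst | exact: rho_small].
- near=> t; have t_gt0 : 0 < t by near: t; exact: nbhs_right_gt.
  by rewrite !mulf_neq0 ?(gt_eqF t_gt0) ?(gt_eqF alpha_gt0).
- move=> t t_gt0; rewrite perturb_expansion ?ltW // C0_eq0.
  by field; rewrite C1_neq0 !gt_eqF.
Unshelve. all: by end_near. Qed.

Lemma renyi_gap_equiv_quadratic : (exists k, c k != 0) -> C1 = 0 ->
  (fun eps => (renyi alpha p - renyi alpha (perturb N1 p c eps)) /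
     (alpha * eps ^+ 2 / 2 * C2 * S^-1)) @ 0^'+ --> (1 : R).
Proof.
move=> [k ck_neq0] C1_eq0.
have k_ge : (N1 <= k)%N by rewrite leqNgt; apply: contra ck_neq0 => /c_zero ->.
have C2_gt0 : 0 < C2.
  apply: (@psumr_gt0 _ _ _ _ k) => // [j _|]; first by rewrite mulr_ge0 ?sqr_ge0 ?powR_ge0.
  by rewrite mulr_gt0 ?powR_gt0 ?p_gt0 // lt_def sqr_ge0 sqrf_eq0 ck_neq0.
have K_neq0 : K != 0.
  by rewrite !mulf_neq0 ?invr_eq0 ?pnatr_eq0 ?(gt_eqF alpha_gt0) // subr_eq0 lt_eqF.
apply: (@renyi_gap_equiv (fun t => alpha * t ^+ 2 / 2 * C2 * S^-1)
  (fun t => K * C2 * (t * t)) (fun t => rho t / t ^+ 2 / (K * C2))).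
- by move=> t; field; rewrite (gt_eqF S_gt0) subr_eq0 lt_eqF.
- rewrite -[X in _ --> X](mulr0 (K * C2)); apply: cvgM; first exact: cvg_cst.
  by rewrite -[X in _ --> X](mul0r 0); apply: cvgM; exact: cvg_id_at_right0.
- rewrite -[X in _ --> X](mul0r (K * C2)^-1).
  by apply: cvgM; [exact: rho_small | exact: cvg_cst].
- near=> t; have t_neq0 : t != 0 by rewrite gt_eqF //; near: t; exact: nbhs_right_gt.
  exact: mulf_neq0 (mulf_neq0 K_neq0 (lt0r_neq0 C2_gt0)) (mulf_neq0 t_neq0 t_neq0).
- move=> t t_gt0; rewrite perturb_expansion ?ltW // C0_eq0 C1_eq0.
  by field; rewrite (gt_eqF C2_gt0) (gt_eqF alpha_gt0) (gt_eqF t_gt0) subr_eq0 lt_eqF.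
Unshelve. all: by end_near. Qed.

End support_unperturbed.

End renyi_perturbation.

Theorem mainTheorem8 (R : realType) (alpha : R) (N N1 : nat) (p c : 'I_N -> R) :
  0 < alpha < 1 ->
  (1 <= N)%N -> (N1 < N)%N ->
  (forall k, 0 <= p k) -> \sum_(k < N) p k = 1 ->
  (forall k : 'I_N, (k < N1)%N -> p k = 0) ->
  (forall k : 'I_N, (N1 <= k)%N -> 0 < p k) ->
  (exists k, c k != 0) ->
  (forall k : 'I_N, (k < N1)%N -> 0 <= c k <= 1) ->
  (forall k : 'I_N, (N1 <= k)%N -> `|c k| <= 1) ->
  \sum_(k < N) c k = 0 ->
  let S := \sum_(k < N | (N1 <= k)%N) p k `^ alpha in
  let D := fun eps => renyi alpha p - renyi alpha (perturb N1 p c eps) in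
  (* (i) *)
  ((exists k : 'I_N, (k < N1)%N /\ c k != 0) ->
     (fun eps => D eps /
        (eps `^ alpha / (alpha - 1) * (\sum_(k < N | (k < N1)%N) c k `^ alpha)
           * S^-1))
     @ 0^'+ --> (1 : R)) /\
  (* (ii) *)
  ((forall k : 'I_N, (k < N1)%N -> c k = 0) ->
   \sum_(k < N | (N1 <= k)%N) c k * p k `^ (alpha - 1) != 0 ->
     (fun eps => D eps /
        (alpha * eps / (alpha - 1)
           * (\sum_(k < N | (N1 <= k)%N) c k * p k `^ (alpha - 1)) * S^-1))
     @ 0^'+ --> (1 : R)) /\
  (* (iii) *)
  ((forall k : 'I_N, (k < N1)%N -> c k = 0) ->
   \sum_(k < N | (N1 <= k)%N) c k * p k `^ (alpha - 1) = 0 ->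
     (fun eps => D eps /
        (alpha * eps ^+ 2 / 2
           * (\sum_(k < N | (N1 <= k)%N) c k ^+ 2 * p k `^ (alpha - 2)) * S^-1))
     @ 0^'+ --> (1 : R)).
Proof.
move=> /andP[alpha_gt0 alpha_lt1] _ N1_lt_N _ _ p_zero p_gt0 c_neq0 c_bounds _ _ S D.
have c_ge0 (k : 'I_N) : (k < N1)%N -> 0 <= c k by move/c_bounds/andP=> [].
split; [|split].
- exact: renyi_gap_equiv_support.
- by move=> c_zero; apply: renyi_gap_equiv_linear.
- by move=> c_zero; apply: renyi_gap_equiv_quadratic.
Qed.
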